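(* Let $G$ be the $m\times n$ grid with $m,n\ge 2$, and let $X\subseteq V$ contain $t_1=(1,z_1)$ and $t_2=(m,z_2)$ with $1\le z_1<z_2\le n$. Suppose that for every pair of vertices $(a_1,b_1),(a_2,b_2)$ with $a_1<a_2$, $a_1+b_1=a_2+b_2$ and $z_1\le b_2<b_1\le z_2$, some vertex of $X$ separates $(a_1,b_1)$ and $(a_2,b_2)$. Then $X$ is a landmark set of $G$.
   Context: The $m\times n$ grid $G$ has vertex set $V=\{(i,j):1\le i\le m,\ 1\le j\le n\}$, with $(i_1,j_1),(i_2,j_2)$ adjacent iff $|i_1-i_2|+|j_1-j_2|=1$; thus $d((i_1,j_1),(i_2,j_2))=|i_1-i_2|+|j_1-j_2|$. A vertex $x$ separates $u,v$ if $d(x,u)\neq d(x,v)$. A landmark set is $L\subseteq V$ such that every pair of distinct vertices is separated by some vertex of $L$. *)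

From Stdlib Require Import Arith Lia.

Definition vertex : Type := (nat * nat)%type.

Definition in_grid (m n : nat) (v : vertex) : Prop :=
  1 <= fst v <= m /\ 1 <= snd v <= n.

Definition absdiff (a b : nat) : nat := (a - b) + (b - a).

Definition dist (u v : vertex) : nat :=
  absdiff (fst u) (fst v) + absdiff (snd u) (snd v).

Definition separates (x u v : vertex) : Prop := dist x u <> dist x v.

Definition landmark_set (m n : nat) (L : vertex -> Prop) : Prop :=
  (forall x, L x -> in_grid m n x) /\
  forall u v, in_grid m n u -> in_grid m n v -> u <> v ->
    exists x, L x /\ separates x u v.

(* From the left end t1 = (1, z1) and the right end t2 = (m, z2), a vertex (a, b)
   is at distances (a - 1) + |b - z1| and (m - a) + |b - z2|.  If neither end
   separates u and v, adding the two equalities shows that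
   |b - z1| + |b - z2| takes the same value at both columns; this function is
   constant on [z1, z2] and otherwise injective up to the reflection
   b |-> z1 + z2 - b.  Hence u and v either lie on a common antidiagonal inside
   the band z1 <= b <= z2, which the hypothesis covers, or are mirror images
   (a + z2 - z1, b) and (a, z1 + z2 - b) with b < z1.  A direct computation
   shows that every vertex separating the band pair (a, z1 + 1), (a + 1, z1)
   also separates such a mirror pair. *)
From Stdlib Require Import Arith Lia.

Definition resolved (L : vertex -> Prop) (u v : vertex) : Prop :=
  exists x, L x /\ separates x u v.

Lemma resolved_sym L u v : resolved L u v -> resolved L v u.
Proof. intros [x [Lx Sx]]; exists x; split; [exact Lx | congruence]. Qed.

Lemma absdiff_le x y : x <= y -> absdiff x y = y - x.
Proof. unfold absdiff; lia. Qed.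

Lemma absdiff_ge x y : y <= x -> absdiff x y = x - y.
Proof. unfold absdiff; lia. Qed.

Lemma absdiff_sum_eq z1 z2 b1 b2 : z1 <= z2 ->
  absdiff z1 b1 + absdiff z2 b1 = absdiff z1 b2 + absdiff z2 b2 ->
  (z1 <= b1 <= z2 /\ z1 <= b2 <= z2) \/ b1 = b2 \/ b1 + b2 = z1 + z2.
Proof. unfold absdiff; lia. Qed.

Lemma dist_first_row z a b : 1 <= a -> dist (1, z) (a, b) = a - 1 + absdiff z b.
Proof. intros; unfold dist; cbn [fst snd]; rewrite (absdiff_le 1 a); lia. Qed.

Lemma dist_last_row m z a b : a <= m -> dist (m, z) (a, b) = m - a + absdiff z b.
Proof. intros; unfold dist; cbn [fst snd]; rewrite (absdiff_ge m a); lia. Qed.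

Lemma unresolved_pair_cases m z1 z2 a1 b1 a2 b2 :
  z1 < z2 -> 1 <= a1 <= m -> 1 <= a2 <= m -> (a1, b1) <> (a2, b2) ->
  dist (1, z1) (a1, b1) = dist (1, z1) (a2, b2) ->
  dist (m, z2) (a1, b1) = dist (m, z2) (a2, b2) ->
  (a1 + b1 = a2 + b2 /\ a1 <> a2 /\ z1 <= b1 <= z2 /\ z1 <= b2 <= z2) \/
  (b1 < z1 /\ b1 + b2 = z1 + z2 /\ a1 = a2 + (z2 - z1)) \/
  (b2 < z1 /\ b1 + b2 = z1 + z2 /\ a2 = a1 + (z2 - z1)).
Proof.
  intros Hz Ha1 Ha2 Hne E1 E2.
  rewrite !dist_first_row in E1 by lia.
  rewrite !dist_last_row in E2 by lia.
  assert (D1 : a1 + absdiff z1 b1 = a2 + absdiff z1 b2) by lia.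
  assert (Hsum : absdiff z1 b1 + absdiff z2 b1 = absdiff z1 b2 + absdiff z2 b2) by lia.
  assert (Ha : b1 = b2 -> a1 <> a2) by (intros -> ->; auto).
  destruct (absdiff_sum_eq z1 z2 b1 b2) as [[Hb1 Hb2] | [Hb | Hb]]; [lia | exact Hsum | | |].
  - left; rewrite !absdiff_le in D1 by lia; lia.
  - subst b2; lia.
  - destruct (Nat.lt_ge_cases b1 z1) as [Hb1 | Hb1];
      [| destruct (Nat.lt_ge_cases b2 z1) as [Hb2 | Hb2]].
    + right; left. rewrite absdiff_ge, absdiff_le in D1 by lia; lia.
    + right; right. rewrite absdiff_le, absdiff_ge in D1 by lia; lia.
    + left. rewrite !absdiff_le in D1 by lia; lia.
Qed.

Section TwoEndLandmarks.

Variables (m n z1 z2 : nat) (X : vertex -> Prop).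
Hypothesis z1_lt_z2 : z1 < z2.
Hypothesis X_resolves_band : forall a1 b1 a2 b2 : nat,
  in_grid m n (a1, b1) -> in_grid m n (a2, b2) ->
  a1 < a2 -> a1 + b1 = a2 + b2 -> z1 <= b2 -> b2 < b1 -> b1 <= z2 ->
  resolved X (a1, b1) (a2, b2).

Lemma band_pair_resolved a1 b1 a2 b2 :
  in_grid m n (a1, b1) -> in_grid m n (a2, b2) -> a1 <> a2 -> a1 + b1 = a2 + b2 ->
  z1 <= b1 <= z2 -> z1 <= b2 <= z2 -> resolved X (a1, b1) (a2, b2).
Proof.
  intros Hu Hv Ha Hs Hb1 Hb2.
  apply Nat.lt_gt_cases in Ha as [Hlt | Hgt]; [ | apply resolved_sym ];
    apply X_resolves_band; auto; lia.
Qed.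

Lemma mirror_pair_resolved a b :
  1 <= a -> a + (z2 - z1) <= m -> z1 + 1 <= n -> b < z1 ->
  resolved X (a + (z2 - z1), b) (a, z1 + z2 - b).
Proof.
  intros Ha Ham Hn Hb.
  destruct (X_resolves_band a (z1 + 1) (a + 1) z1) as [[xi xj] [Xx Sx]];
    unfold in_grid; cbn [fst snd]; try lia.
  exists (xi, xj); split; [exact Xx |].
  revert Sx; unfold separates, dist, absdiff; cbn [fst snd]; lia.
Qed.

End TwoEndLandmarks.

Theorem mainTheorem11 (m n z1 z2 : nat) (X : vertex -> Prop) :
  2 <= m -> 2 <= n ->
  (forall x, X x -> in_grid m n x) ->
  1 <= z1 -> z1 < z2 -> z2 <= n ->
  X (1, z1) -> X (m, z2) ->
  (forall a1 b1 a2 b2 : nat,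
     in_grid m n (a1, b1) -> in_grid m n (a2, b2) ->
     a1 < a2 -> a1 + b1 = a2 + b2 -> z1 <= b2 -> b2 < b1 -> b1 <= z2 ->
     exists x, X x /\ separates x (a1, b1) (a2, b2)) ->
  landmark_set m n X.
Proof.
  intros _ _ HX Hz1 Hz Hz2 Ht1 Ht2 Hband.
  split; [exact HX |].
  intros [a1 b1] [a2 b2] Hu Hv Hne.
  destruct (Nat.eq_dec (dist (1, z1) (a1, b1)) (dist (1, z1) (a2, b2))) as [E1 | E1];
    [| now exists (1, z1)].
  destruct (Nat.eq_dec (dist (m, z2) (a1, b1)) (dist (m, z2) (a2, b2))) as [E2 | E2];
    [| now exists (m, z2)].
  pose proof Hu as [Ha1 Hb1]; pose proof Hv as [Ha2 Hb2]; cbn [fst snd] in *.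
  destruct (unresolved_pair_cases m z1 z2 a1 b1 a2 b2)
    as [[Hs [Ha [Hband1 Hband2]]] | [[Hlow [Hsum Ha]] | [Hlow [Hsum Ha]]]];
    auto; try lia.
  - now apply (band_pair_resolved m n z1 z2).
  - subst a1; replace b2 with (z1 + z2 - b1) by lia.
    apply (mirror_pair_resolved m n z1 z2); auto; lia.
  - apply resolved_sym; subst a2; replace b1 with (z1 + z2 - b2) by lia.
    apply (mirror_pair_resolved m n z1 z2); auto; lia.
Qed.
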